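(* Consider a network of $K\ge2$ sensors with $f^1_m=\dots=f^K_m=f_m$ for all $m=0,\dots,M-1$. Fix a state $m$ and let $\bar\phi^{0,\max}_m=\sum_jp^j_m\phi^{0,j}_m$ be a maximin quantizer for state $m$ in the single-sensor problem with densities $f_0,\dots,f_{M-1}$. For each $j$ let $\phi^{\cdot,j}_m=(\phi^{0,j}_m,\dots,\phi^{0,j}_m)$ be the $K$-fold replication, and let $\bar\phi^*_m=\sum_jp^j_m\phi^{\cdot,j}_m$. Then $\bar\phi^*_m$ is a maximin quantizer vector for state $m$.
   Context: Single-sensor notions: a raw observation $X$ has density $f_m$ under state $m\in\{0,\dots,M-1\}$ (probability $\mathbf P_m$); deterministic quantizers are measurable maps to $\{0,1\}$ (set $\Phi$); a randomized quantizer $\bar\phi=\sum_jp^j\phi^j$ is a probability distribution on a countable subset of $\Phi$; $\bar\Phi$ is the set of all quantizers; $f_m(u;\phi)=\mathbf P_m(\phi(X)=u)$, $I(m,m';\phi)=\sum_uf_m(u;\phi)\log\frac{f_m(u;\phi)}{f_{m'}(u;\phi)}$, $I(m,m';\bar\phi)=\sum_jp^jI(m,m';\phi^j)$, $I(m;\bar\phi)=\min_{m'\ne m}I(m,m';\bar\phi)$, and a maximin quantizer for $m$ maximizes $I(m;\cdot)$ over $\bar\Phi$. Multi-sensor setting: sensor $k=1,\dots,K$ observes $X^k$ with density $f^k_m$ under $\mathbf P_m$, independent across sensors. A deterministic quantizer vector is $\phi=(\phi^1,\dots,\phi^K)$ with $\phi^k$ a deterministic quantizer at sensor $k$; $\Phi^{(K)}$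 is their set. A randomized quantizer vector is $\bar\phi=\sum_jp^j\phi^{\cdot,j}$, a probability distribution on a countable subset $\{\phi^{\cdot,j}\}\subset\Phi^{(K)}$; $\overline{\Phi^{(K)}}$ denotes all quantizer vectors. K-L divergences: $I(m,m';\phi)=\sum_{k=1}^KI(m,m';\phi^k)$ (with $I(m,m';\phi^k)$ computed from $f^k_m,f^k_{m'}$) and $I(m,m';\bar\phi)=\sum_jp^jI(m,m';\phi^{\cdot,j})$; $I(m;\bar\phi)=\min_{m'\neq m}I(m,m';\bar\phi)$; a maximin quantizer vector for state $m$ is a $\bar\phi\in\overline{\Phi^{(K)}}$ maximizing $I(m;\bar\phi)$ over $\overline{\Phi^{(K)}}$. *)

From Stdlib Require Import Reals List Classical ClassicalEpsilon.
Import ListNotations.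
Open Scope R_scope.

Record MeasSpace := {
  carrier :> Type;
  msets : (carrier -> Prop) -> Prop;
  ms_full : msets (fun _ => True);
  ms_compl : forall A, msets A -> msets (fun s => ~ A s);
  ms_union : forall A : nat -> carrier -> Prop,
      (forall n, msets (A n)) -> msets (fun s => exists n, A n s)
}.

Definition is_prob (X : MeasSpace) (P : (X -> Prop) -> R) : Prop :=
  (forall A, msets X A -> 0 <= P A) /\
  P (fun _ => True) = 1 /\
  (forall A : nat -> X -> Prop,
      (forall n, msets X (A n)) ->
      (forall n n' s, n <> n' -> A n s -> A n' s -> False) ->
      infinite_sum (fun n => P (A n)) (P (fun s => exists n, A n s))).

Inductive ER := Fin (r : R) | PInf.

Definition ERle (x y : ER) : Prop :=
  match x, y with
  | _, PInf => True
  | PInf, Fin _ => False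
  | Fin a, Fin b => a <= b
  end.

Definition ERplus (x y : ER) : ER :=
  match x, y with
  | Fin a, Fin b => Fin (a + b)
  | _, _ => PInf
  end.

Definition ERmin (x y : ER) : ER :=
  match x, y with
  | PInf, y => y
  | x, PInf => x
  | Fin a, Fin b => Fin (Rmin a b)
  end.

Definition ER_fin (x : ER) : R := match x with Fin a => a | PInf => 0 end.

(* A deterministic quantizer: a measurable map X -> {0,1} (bool: false=0, true=1). *)
Definition det_quant (X : MeasSpace) (phi : X -> bool) : Prop :=
  msets X (fun s => phi s = true).

Definition fq (X : MeasSpace) (Pm : (X -> Prop) -> R) (u : bool) (phi : X -> bool) : R :=
  Pm (fun s => phi s = u).

Definition kl_term (a b : R) : ER :=
  if Req_EM_T a 0 then Fin 0
  else if Req_EM_T b 0 then PInf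
  else Fin (a * ln (a / b)).

(* I(m, m'; phi) for a deterministic quantizer, P : state -> law of X *)
Definition KL_det (X : MeasSpace) (P : nat -> (X -> Prop) -> R)
    (m m' : nat) (phi : X -> bool) : ER :=
  ERplus (kl_term (fq X (P m) false phi) (fq X (P m') false phi))
         (kl_term (fq X (P m) true phi) (fq X (P m') true phi)).

(* sum_j p^j d_j for nonnegative weights and nonnegative extended values,
   with 0 * (+oo) = 0 and a divergent series = +oo *)
Definition mix (p : nat -> R) (d : nat -> ER) : ER :=
  match excluded_middle_informative (exists j, p j <> 0 /\ d j = PInf) with
  | left _ => PInf
  | right _ =>
      match excluded_middle_informative
              (exists v, infinite_sum (fun j => p j * ER_fin (d j)) v) with
      | left H => Fin (proj1_sig (constructive_indefinite_description _ H))
      | right _ => PInf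
      end
  end.

(* min over m' in {0..M-1}, m' <> m  (empty min = +oo) *)
Definition min_other (M m : nat) (g : nat -> ER) : ER :=
  fold_right (fun i acc => if Nat.eq_dec i m then acc else ERmin (g i) acc)
             PInf (seq 0 M).

(* A randomized quantizer sum_j p^j phi^j: probability weights on a countable
   family of deterministic quantizers. *)
Definition rand_quant (X : MeasSpace) (p : nat -> R) (phi : nat -> X -> bool) : Prop :=
  (forall j, 0 <= p j) /\ infinite_sum p 1 /\ (forall j, det_quant X (phi j)).

Definition KL_rand (X : MeasSpace) (P : nat -> (X -> Prop) -> R)
    (m m' : nat) (p : nat -> R) (phi : nat -> X -> bool) : ER :=
  mix p (fun j => KL_det X P m m' (phi j)).

Definition I_state (X : MeasSpace) (M : nat) (P : nat -> (X -> Prop) -> R)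
    (m : nat) (p : nat -> R) (phi : nat -> X -> bool) : ER :=
  min_other M m (fun m' => KL_rand X P m m' p phi).

Definition maximin (X : MeasSpace) (M : nat) (P : nat -> (X -> Prop) -> R)
    (m : nat) (p : nat -> R) (phi : nat -> X -> bool) : Prop :=
  rand_quant X p phi /\
  forall q psi, rand_quant X q psi ->
    ERle (I_state X M P m q psi) (I_state X M P m p phi).

(* Pk k m = law of X^k under state m (sensor k = 0..K-1);
   a quantizer vector is phi : sensor -> X -> bool (components k < K). *)
Definition det_quant_vec (X : MeasSpace) (K : nat) (phi : nat -> X -> bool) : Prop :=
  forall k, (k < K)%nat -> det_quant X (phi k).

Definition KL_det_vec (X : MeasSpace) (K : nat) (Pk : nat -> nat -> (X -> Prop) -> R)
    (m m' : nat) (phi : nat -> X -> bool) : ER :=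
  fold_right ERplus (Fin 0) (map (fun k => KL_det X (Pk k) m m' (phi k)) (seq 0 K)).

Definition rand_quant_vec (X : MeasSpace) (K : nat) (p : nat -> R)
    (phi : nat -> nat -> X -> bool) : Prop :=
  (forall j, 0 <= p j) /\ infinite_sum p 1 /\ (forall j, det_quant_vec X K (phi j)).

Definition KL_rand_vec (X : MeasSpace) (K : nat) (Pk : nat -> nat -> (X -> Prop) -> R)
    (m m' : nat) (p : nat -> R) (phi : nat -> nat -> X -> bool) : ER :=
  mix p (fun j => KL_det_vec X K Pk m m' (phi j)).

Definition I_state_vec (X : MeasSpace) (M K : nat) (Pk : nat -> nat -> (X -> Prop) -> R)
    (m : nat) (p : nat -> R) (phi : nat -> nat -> X -> bool) : ER :=
  min_other M m (fun m' => KL_rand_vec X K Pk m m' p phi).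

Definition maximin_vec (X : MeasSpace) (M K : nat) (Pk : nat -> nat -> (X -> Prop) -> R)
    (m : nat) (p : nat -> R) (phi : nat -> nat -> X -> bool) : Prop :=
  rand_quant_vec X K p phi /\
  forall q psi, rand_quant_vec X K q psi ->
    ERle (I_state_vec X M K Pk m q psi) (I_state_vec X M K Pk m p phi).

From Stdlib Require Import Reals List ClassicalEpsilon Lra Lia.
From Stdlib Require Import FunctionalExtensionality PropExtensionality.
Import ListNotations.
Open Scope R_scope.

(* With identical sensors the divergence I(m, m'; phi) of a deterministic quantizer vector
   is the sum over the sensors of the single-sensor divergences of its components.  Hence
   replicating a randomized single-sensor quantizer on all K sensors multiplies every
   divergence, and so I(m; .), by K.  Conversely a randomized quantizer vector
   sum_j q_j psi_j is matched by the single-sensor randomized quantizer choosing the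
   component psi_j^k with probability q_j / K, whose divergences are those of the vector
   divided by K (regrouping the mixture series by sensor is legitimate because all
   divergences are nonnegative).  Both maps scale I(m; .) by the same factor K, so the
   maximin property carries over from the single sensor to the replicated vector. *)

Definition rsum (l : list nat) (f : nat -> R) : R := fold_right (fun k acc => f k + acc) 0 l.

Definition psum (f : nat -> R) (n : nat) : R := rsum (seq 0 n) f.

Lemma rsum_app l1 l2 f : rsum (l1 ++ l2) f = rsum l1 f + rsum l2 f.
Proof. induction l1 as [|k l1 IH]; unfold rsum in *; cbn; [lra|]. rewrite IH; lra. Qed.

Lemma rsum_ext l f g : (forall k, In k l -> f k = g k) -> rsum l f = rsum l g.
Proof.
  induction l as [|k l IH]; intros H; unfold rsum in *; cbn; [reflexivity|].
  rewrite H, IH; [reflexivity| |left; reflexivity].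
  intros j Hj; apply H; right; exact Hj.
Qed.

Lemma rsum_ge0 l f : (forall k, 0 <= f k) -> 0 <= rsum l f.
Proof.
  intros H; induction l as [|k l IH]; unfold rsum in *; cbn; [lra|].
  specialize (H k); lra.
Qed.

Lemma rsum_scal l f a : rsum l (fun k => a * f k) = a * rsum l f.
Proof. induction l as [|k l IH]; unfold rsum in *; cbn; [ring|]. rewrite IH; ring. Qed.

Lemma rsum_const l c : rsum l (fun _ => c) = INR (length l) * c.
Proof.
  induction l as [|k l IH]; unfold rsum in *; [cbn; ring|].
  cbn -[INR]; rewrite IH, S_INR; ring.
Qed.

Lemma rsum_seq_shift n : forall a f, rsum (seq a n) f = rsum (seq 0 n) (fun k => f (a + k)%nat).
Proof.
  induction n as [|n IH]; intros a f; unfold rsum in *; cbn; [reflexivity|].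
  rewrite (IH (S a)), (IH 1%nat), Nat.add_0_r.
  f_equal; apply rsum_ext; intros k _; f_equal; lia.
Qed.

Lemma psum_add f a n : psum f (a + n) = psum f a + rsum (seq a n) f.
Proof. unfold psum; rewrite seq_app, rsum_app; reflexivity. Qed.

Lemma psum_le f a b : (forall k, 0 <= f k) -> (a <= b)%nat -> psum f a <= psum f b.
Proof.
  intros Hf Hab; replace b with (a + (b - a))%nat by lia.
  rewrite psum_add; pose proof (rsum_ge0 (seq a (b - a)) f Hf); lra.
Qed.

Lemma psum_blocks t K N : psum (fun j => rsum (seq (j * K) K) t) N = psum t (N * K).
Proof.
  induction N as [|N IH]; [reflexivity|].
  unfold psum at 1; rewrite seq_S, rsum_app; fold (psum (fun j => rsum (seq (j * K) K) t) N).
  rewrite IH; replace (S N * K)%nat with (N * K + K)%nat by lia.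
  rewrite psum_add; cbn; ring.
Qed.

Lemma psum_S f n : psum f (S n) = sum_f_R0 f n.
Proof.
  induction n as [|n IH]; [cbn; ring|].
  unfold psum in *; rewrite seq_S, rsum_app, IH; cbn; ring.
Qed.

Lemma Un_cv_ext u w l : (forall n, u n = w n) -> Un_cv u l -> Un_cv w l.
Proof. intros E; replace w with u by (apply functional_extensionality; exact E); auto. Qed.

Lemma Un_cv_const c : Un_cv (fun _ => c) c.
Proof. intros eps Heps; exists 0%nat; intros n _; rewrite Rdist_eq; lra. Qed.

Lemma infinite_sum_psum f v : infinite_sum f v <-> Un_cv (psum f) v.
Proof.
  split; intros H.
  - apply (CV_shift _ 1); apply (Un_cv_ext (sum_f_R0 f)); auto.
    intros n; rewrite Nat.add_1_r, psum_S; reflexivity.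
  - apply (Un_cv_ext (fun n => psum f (n + 1))); [|exact (CV_shift' _ 1 _ H)].
    intros n; rewrite Nat.add_1_r, psum_S; reflexivity.
Qed.

Lemma infinite_sum_scal f v a :
  infinite_sum f v -> infinite_sum (fun j => a * f j) (a * v).
Proof.
  intros H; apply (Un_cv_ext (fun n => a * sum_f_R0 f n)).
  - intros n; rewrite scal_sum; apply sum_eq; intros; ring.
  - exact (CV_mult _ _ _ _ (Un_cv_const a) H).
Qed.

Lemma infinite_sum_scal_iff f v a : a <> 0 ->
  infinite_sum (fun j => a * f j) (a * v) <-> infinite_sum f v.
Proof.
  intros Ha; split; [|apply infinite_sum_scal].
  intros H; apply infinite_sum_scal with (a := / a) in H.
  rewrite <- Rmult_assoc, Rinv_l, Rmult_1_l in H by exact Ha.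
  revert H; apply Un_cv_ext; intros n; apply sum_eq; intros i _; field; exact Ha.
Qed.

(* The partial sums of a nonnegative series are monotone, so they are squeezed between
   consecutive block endpoints. *)
Lemma infinite_sum_blocks (t T : nat -> R) K v :
  (0 < K)%nat -> (forall n, 0 <= t n) ->
  (forall j, T j = rsum (seq (j * K) K) t) ->
  infinite_sum t v <-> infinite_sum T v.
Proof.
  intros HK Ht HT; rewrite !infinite_sum_psum.
  assert (Hblk : forall N, psum T N = psum t (N * K)).
  { intros N; rewrite <- psum_blocks; unfold psum; apply rsum_ext; auto. }
  split; intros H eps Heps; destruct (H eps Heps) as [N HN].
  - exists N; intros n Hn; rewrite Hblk; apply HN; nia.
  - exists (N * K)%nat; intros n Hn; set (j := (n / K)%nat).
    assert (Hj : (N <= j)%nat) by (apply Nat.div_le_lower_bound; lia).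
    assert (Hlo : (j * K <= n)%nat)
      by (pose proof (Nat.Div0.mul_div_le n K); unfold j; lia).
    assert (Hhi : (n <= S j * K)%nat)
      by (pose proof (Nat.mul_succ_div_gt n K); unfold j; lia).
    pose proof (psum_le t _ _ Ht Hlo); pose proof (psum_le t _ _ Ht Hhi).
    pose proof (HN j Hj) as Dlo; pose proof (HN (S j) ltac:(lia)) as Dhi.
    rewrite Hblk in Dlo, Dhi; unfold Rdist in *.
    apply Rabs_def1; apply Rabs_def2 in Dlo; apply Rabs_def2 in Dhi; lra.
Qed.

Definition ERscale (c : R) (x : ER) : ER :=
  match x with Fin r => Fin (c * r) | PInf => PInf end.

Lemma ERscale_1 x : ERscale 1 x = x.
Proof. destruct x; cbn; [f_equal; ring|reflexivity]. Qed.

Lemma ERscaleA a b x : ERscale a (ERscale b x) = ERscale (a * b) x.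
Proof. destruct x; cbn; [f_equal; ring|reflexivity]. Qed.

Lemma ERle_scale c x y : 0 < c -> ERle x y -> ERle (ERscale c x) (ERscale c y).
Proof. destruct x, y; cbn; auto; intros; nra. Qed.

Lemma ERscale_min c x y : 0 < c -> ERscale c (ERmin x y) = ERmin (ERscale c x) (ERscale c y).
Proof.
  intros Hc; destruct x as [r|], y as [s|]; cbn; auto.
  f_equal; unfold Rmin; destruct (Rle_dec r s), (Rle_dec (c * r) (c * s)); auto; nra.
Qed.

Lemma ERle_plus x x' y y' : ERle x x' -> ERle y y' -> ERle (ERplus x y) (ERplus x' y').
Proof. destruct x, x', y, y'; cbn; auto; lra. Qed.

Lemma ER_fin_ge0 x : ERle (Fin 0) x -> 0 <= ER_fin x.
Proof. destruct x; cbn; lra. Qed.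

Definition ERsum (l : list nat) (g : nat -> ER) : ER := fold_right ERplus (Fin 0) (map g l).

Lemma ERsum_eq_PInf l g : ERsum l g = PInf <-> exists k, In k l /\ g k = PInf.
Proof.
  unfold ERsum; induction l as [|k l IH]; cbn.
  - split; [discriminate|intros [j [[] _]]].
  - split.
    + destruct (g k) eqn:Ek; [|eauto].
      destruct (fold_right ERplus (Fin 0) (map g l)); cbn; [discriminate|].
      intros _; destruct (proj1 IH eq_refl) as [j [Hj Hg]]; eauto.
    + intros [j [[<-|Hj] Hg]]; [rewrite Hg; reflexivity|].
      rewrite (proj2 IH) by eauto; destruct (g k); reflexivity.
Qed.

Lemma ERsum_fin l g : (forall k, In k l -> g k <> PInf) ->
  ERsum l g = Fin (rsum l (fun k => ER_fin (g k))).
Proof.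
  unfold ERsum; induction l as [|k l IH]; intros H; cbn; [reflexivity|].
  rewrite IH by (intros j Hj; apply H; right; exact Hj).
  destruct (g k) eqn:E; [reflexivity|]; exfalso; exact (H k (or_introl eq_refl) E).
Qed.

Lemma ERsum_const l x : l <> [] -> ERsum l (fun _ => x) = ERscale (INR (length l)) x.
Proof.
  unfold ERsum; induction l as [|k l IH]; intros Hl; [congruence|].
  destruct l as [|k' l].
  - destruct x; cbn; [f_equal; ring|reflexivity].
  - cbn [map fold_right] in *; rewrite IH by discriminate.
    destruct x; cbn -[INR]; [|reflexivity].
    rewrite (S_INR (S (length l))); f_equal; ring.
Qed.

Lemma min_other_ext M m g h : (forall i, (i < M)%nat -> g i = h i) ->
  min_other M m g = min_other M m h.
Proof.
  intros H; unfold min_other.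
  assert (Hseq : forall i, In i (seq 0 M) -> g i = h i)
    by (intros i Hi; apply in_seq in Hi; apply H; lia).
  induction (seq 0 M) as [|i l IH]; cbn; [reflexivity|].
  rewrite IH, Hseq; [reflexivity|left; reflexivity|].
  intros j Hj; apply Hseq; right; exact Hj.
Qed.

Lemma min_other_scale M m g c : 0 < c ->
  min_other M m (fun i => ERscale c (g i)) = ERscale c (min_other M m g).
Proof.
  intros Hc; unfold min_other; induction (seq 0 M) as [|i l IH]; cbn; [reflexivity|].
  destruct (Nat.eq_dec i m); [exact IH|]; rewrite IH, ERscale_min; auto.
Qed.

Lemma infinite_sum_const_self c : infinite_sum (fun _ => c) c -> c = 0.
Proof.
  intros H.
  pose proof (CV_minus _ _ _ _ (CV_shift' _ 1 _ H) H) as Hdiff.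
  apply (UL_sequence (fun _ => c)); [apply Un_cv_const|].
  revert Hdiff; rewrite Rminus_diag; apply Un_cv_ext; intros n.
  rewrite Nat.add_1_r; cbn [sum_f_R0]; ring.
Qed.

Section ProbabilityMeasure.

Variables (X : MeasSpace) (Q : (X -> Prop) -> R).
Hypothesis HQ : is_prob X Q.

Lemma msets_empty : msets X (fun _ => False).
Proof.
  replace (fun _ : X => False) with (fun _ : X => ~ True); [apply ms_compl, ms_full|].
  apply functional_extensionality; intros s; apply propositional_extensionality; tauto.
Qed.

Lemma prob_empty : Q (fun _ => False) = 0.
Proof.
  destruct HQ as [_ [_ Hadd]].
  apply infinite_sum_const_self.
  specialize (Hadd (fun _ => fun _ => False) (fun _ => msets_empty) ltac:(tauto)).
  cbv beta in Hadd.
  replace (fun s : X => exists _ : nat, False) with (fun _ : X => False) in Hadd; [exact Hadd|].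
  apply functional_extensionality; intros s; apply propositional_extensionality.
  split; [tauto|intros [_ []]].
Qed.

Lemma prob_disjoint_union (A B : X -> Prop) : msets X A -> msets X B ->
  (forall s, A s -> B s -> False) -> Q (fun s => A s \/ B s) = Q A + Q B.
Proof.
  intros HA HB Hdisj; destruct HQ as [_ [_ Hadd]].
  set (U := fun n : nat => match n with 0%nat => A | 1%nat => B | _ => fun _ => False end).
  assert (HU : forall n, msets X (U n))
    by (intros [|[|n]]; [exact HA|exact HB|exact msets_empty]).
  assert (HUdisj : forall n n' s, n <> n' -> U n s -> U n' s -> False)
    by (intros [|[|n]] [|[|n']] s Hn; cbn; try congruence; eauto).
  specialize (Hadd U HU HUdisj).
  replace (fun s => exists n, U n s) with (fun s => A s \/ B s) in Hadd.
  - apply (uniqueness_sum _ _ _ Hadd); intros eps Heps; exists 1%nat; intros n Hn.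
    replace (sum_f_R0 (fun n => Q (U n)) n) with (Q A + Q B); [rewrite Rdist_eq; lra|].
    destruct n as [|n]; [lia|]; induction n as [|n IH]; [cbn; ring|].
    rewrite tech5, <- IH by lia; cbn; rewrite prob_empty; ring.
  - apply functional_extensionality; intros s; apply propositional_extensionality; split.
    + intros [Hs|Hs]; [exists 0%nat|exists 1%nat]; exact Hs.
    + intros [[|[|n]] Hs]; cbn in Hs; tauto.
Qed.

Lemma det_quant_cell (phi : X -> bool) u : det_quant X phi -> msets X (fun s => phi s = u).
Proof.
  intros Hphi; destruct u; [exact Hphi|].
  replace (fun s => phi s = false) with (fun s => ~ phi s = true); [apply ms_compl, Hphi|].
  apply functional_extensionality; intros s; apply propositional_extensionality.
  destruct (phi s); intuition congruence.
Qed.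

Lemma fq_ge0 (phi : X -> bool) u : det_quant X phi -> 0 <= fq X Q u phi.
Proof. intros Hphi; apply (proj1 HQ), det_quant_cell, Hphi. Qed.

Lemma fq_false_add_true (phi : X -> bool) : det_quant X phi ->
  fq X Q false phi + fq X Q true phi = 1.
Proof.
  intros Hphi; unfold fq; destruct HQ as [_ [Hfull _]].
  rewrite <- prob_disjoint_union by (try apply det_quant_cell; auto; congruence).
  rewrite <- Hfull; f_equal.
  apply functional_extensionality; intros s; apply propositional_extensionality.
  destruct (phi s); tauto.
Qed.

End ProbabilityMeasure.

(* [ln y <= y - 1] at [y = b / a]. *)
Lemma kl_term_ge_sub a b : 0 <= a -> 0 <= b -> ERle (Fin (a - b)) (kl_term a b).
Proof.
  intros Ha Hb; unfold kl_term.
  destruct (Req_EM_T a 0) as [->|Ha0]; [cbn; lra|].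
  destruct (Req_EM_T b 0) as [->|Hb0]; [exact I|]; cbn.
  assert (Hy : 0 < b / a) by (apply Rdiv_lt_0_compat; lra).
  replace (a / b) with (/ (b / a)) by (field; lra); rewrite ln_Rinv by exact Hy.
  pose proof (exp_ineq1_le (ln (b / a))) as Hexp; rewrite exp_ln in Hexp by exact Hy.
  assert (a * (b / a) = b) by (field; lra); nra.
Qed.

Lemma KL_det_ge0 (X : MeasSpace) (P : nat -> (X -> Prop) -> R) m m' (phi : X -> bool) :
  is_prob X (P m) -> is_prob X (P m') -> det_quant X phi -> ERle (Fin 0) (KL_det X P m m' phi).
Proof.
  intros Hm Hm' Hphi; unfold KL_det.
  replace 0 with ((fq X (P m) false phi - fq X (P m') false phi)
                  + (fq X (P m) true phi - fq X (P m') true phi)).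
  - apply (ERle_plus (Fin _) _ (Fin _)); apply kl_term_ge_sub; apply fq_ge0; auto.
  - pose proof (fq_false_add_true X (P m) Hm phi Hphi).
    pose proof (fq_false_add_true X (P m') Hm' phi Hphi); lra.
Qed.

(* [mix] only sees whether some atom of positive weight is infinite and, if none is, the
   sum of the real series. *)
Lemma mix_eq_scale p d p' d' a : 0 < a ->
  ((exists j, p j <> 0 /\ d j = PInf) <-> (exists j, p' j <> 0 /\ d' j = PInf)) ->
  (~ (exists j, p j <> 0 /\ d j = PInf) -> forall v,
     infinite_sum (fun j => p' j * ER_fin (d' j)) (a * v) <->
     infinite_sum (fun j => p j * ER_fin (d j)) v) ->
  mix p' d' = ERscale a (mix p d).
Proof.
  intros Ha Hinf Hsum; unfold mix.
  destruct (excluded_middle_informative (exists j, p' j <> 0 /\ d' j = PInf)) as [I'|I'];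
  destruct (excluded_middle_informative (exists j, p j <> 0 /\ d j = PInf)) as [I|I];
  try reflexivity; try tauto.
  specialize (Hsum I).
  destruct (excluded_middle_informative
              (exists v, infinite_sum (fun j => p' j * ER_fin (d' j)) v)) as [S'|S'];
  destruct (excluded_middle_informative
              (exists v, infinite_sum (fun j => p j * ER_fin (d j)) v)) as [S|S].
  - destruct (constructive_indefinite_description _ S') as [v' H'].
    destruct (constructive_indefinite_description _ S) as [v H]; cbn.
    f_equal; apply (uniqueness_sum _ _ _ H'), Hsum, H.
  - exfalso; apply S; destruct S' as [v' H']; exists (v' / a); apply Hsum.
    replace (a * (v' / a)) with v' by (field; lra); exact H'.
  - exfalso; apply S'; destruct S as [v H]; exists (a * v); apply Hsum, H.
  - reflexivity.
Qed.

Lemma mix_scale_values p d a : 0 < a ->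
  mix p (fun j => ERscale a (d j)) = ERscale a (mix p d).
Proof.
  intros Ha; apply mix_eq_scale; [exact Ha| |].
  - split; intros [j [Hp Hd]]; exists j; split; auto; destruct (d j); cbn in *; congruence.
  - intros _ v; rewrite <- (infinite_sum_scal_iff _ v a) by lra.
    split; apply Un_cv_ext; intros n; apply sum_eq; intros j _;
      destruct (d j); cbn; ring.
Qed.

Lemma mix_scale_weights p d a : 0 < a -> mix (fun j => p j / a) d = ERscale (/ a) (mix p d).
Proof.
  intros Ha; apply mix_eq_scale; [apply Rinv_0_lt_compat, Ha| |].
  - split; intros [j [Hp Hd]]; exists j; split; auto; intros E; apply Hp.
    + replace (p j) with (p j / a * a) by (field; lra); rewrite E; ring.
    + rewrite E; unfold Rdiv; ring.
  - intros _ v; rewrite <- (infinite_sum_scal_iff _ v (/ a))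
      by (apply Rinv_neq_0_compat; lra).
    split; apply Un_cv_ext; intros n; apply sum_eq; intros j _; unfold Rdiv; ring.
Qed.

Definition flatten {A : Type} (K : nat) (f : nat -> nat -> A) (n : nat) : A :=
  f (n / K)%nat (n mod K)%nat.

Lemma flatten_block {A : Type} K (f : nat -> nat -> A) j k :
  (k < K)%nat -> flatten K f (j * K + k) = f j k.
Proof.
  intros Hk; unfold flatten.
  rewrite Nat.div_add_l, Nat.div_small, Nat.add_0_r by lia.
  rewrite Nat.add_comm, Nat.Div0.mod_add, Nat.mod_small by lia; reflexivity.
Qed.

Lemma flatten_lt {A : Type} K (f : nat -> nat -> A) (P : A -> Prop) :
  (0 < K)%nat -> (forall j k, (k < K)%nat -> P (f j k)) -> forall n, P (flatten K f n).
Proof. intros HK Hf n; apply Hf, Nat.mod_upper_bound; lia. Qed.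

Lemma mix_flatten K (c : nat -> R) (d : nat -> nat -> ER) : (0 < K)%nat ->
  (forall j, 0 <= c j) -> (forall j k, (k < K)%nat -> ERle (Fin 0) (d j k)) ->
  mix (flatten K (fun j _ => c j)) (flatten K d) = mix c (fun j => ERsum (seq 0 K) (d j)).
Proof.
  intros HK Hc Hd; rewrite <- (ERscale_1 (mix c _)); apply mix_eq_scale; [lra| |].
  - split.
    + intros [j [Hcj Hinf]]; apply ERsum_eq_PInf in Hinf as [k [Hk Hinf]].
      apply in_seq in Hk; exists (j * K + k)%nat.
      rewrite !flatten_block by lia; auto.
    + intros [n [Hcn Hinf]]; exists (n / K)%nat; split; [exact Hcn|].
      apply ERsum_eq_PInf; exists (n mod K)%nat; split; [|exact Hinf].
      apply in_seq; pose proof (Nat.mod_upper_bound n K); lia.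
  - intros Hfin v; rewrite Rmult_1_l; apply (infinite_sum_blocks _ _ K); [exact HK| |].
    + apply (flatten_lt K (fun j k => c j * ER_fin (d j k)) (fun x => 0 <= x)); [exact HK|].
      intros j k Hk; apply Rmult_le_pos; [apply Hc|apply ER_fin_ge0, Hd, Hk].
    + intros j; rewrite rsum_seq_shift.
      rewrite (rsum_ext _ _ (fun k => c j * ER_fin (d j k))), rsum_scal.
      2: { intros k Hk; apply in_seq in Hk; rewrite !flatten_block by lia; reflexivity. }
      destruct (Req_dec (c j) 0) as [->|Hcj]; [ring|].
      rewrite ERsum_fin; [reflexivity|].
      intros k Hk Hinf; apply Hfin; exists j; split; [exact Hcj|].
      apply ERsum_eq_PInf; eauto.
Qed.

Lemma rand_quant_flatten (X : MeasSpace) K q (psi : nat -> nat -> X -> bool) : (0 < K)%nat ->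
  rand_quant_vec X K q psi ->
  rand_quant X (flatten K (fun j _ => q j / INR K)) (flatten K psi).
Proof.
  intros HK [Hq0 [Hq1 Hpsi]].
  assert (HKpos : 0 < INR K) by (apply lt_0_INR; exact HK).
  assert (Hw : forall n, 0 <= flatten K (fun j _ => q j / INR K) n)
    by (intros n; apply Rmult_le_pos; [apply Hq0|left; apply Rinv_0_lt_compat, HKpos]).
  split; [exact Hw|split].
  - apply (infinite_sum_blocks _ q K); [exact HK|exact Hw| |exact Hq1].
    intros j; rewrite rsum_seq_shift, (rsum_ext _ _ (fun _ => q j / INR K)).
    + rewrite rsum_const, length_seq; field; lra.
    + intros k Hk; apply in_seq in Hk; rewrite flatten_block by lia; reflexivity.
  - apply (flatten_lt K psi (det_quant X)); [exact HK|].
    intros j k Hk; apply Hpsi, Hk.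
Qed.

Lemma rand_quant_replicate (X : MeasSpace) K p (phi : nat -> X -> bool) :
  rand_quant X p phi -> rand_quant_vec X K p (fun j _ => phi j).
Proof. intros [Hp0 [Hp1 Hphi]]; split; [|split]; auto; intros j k _; apply Hphi. Qed.

Section IdenticalSensors.

Variables (X : MeasSpace) (M K : nat) (P : nat -> (X -> Prop) -> R)
          (Pk : nat -> nat -> (X -> Prop) -> R).
Hypothesis HK : (0 < K)%nat.
Hypothesis Hprob : forall m, (m < M)%nat -> is_prob X (P m).
Hypothesis HPk : forall k m, (k < K)%nat -> (m < M)%nat -> Pk k m = P m.

Let HKpos : 0 < INR K := lt_0_INR K HK.

Lemma KL_det_sensor k m m' phi : (k < K)%nat -> (m < M)%nat -> (m' < M)%nat ->
  KL_det X (Pk k) m m' phi = KL_det X P m m' phi.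
Proof. intros Hk Hm Hm'; unfold KL_det, fq; rewrite !HPk by assumption; reflexivity. Qed.

Lemma KL_rand_vec_replicate m m' p phi : (m < M)%nat -> (m' < M)%nat ->
  KL_rand_vec X K Pk m m' p (fun j _ => phi j) = ERscale (INR K) (KL_rand X P m m' p phi).
Proof.
  intros Hm Hm'; unfold KL_rand_vec, KL_rand; rewrite <- mix_scale_values by exact HKpos.
  f_equal; apply functional_extensionality; intros j; unfold KL_det_vec.
  rewrite (map_ext_in _ (fun _ => KL_det X P m m' (phi j))).
  - change (ERsum (seq 0 K) (fun _ => KL_det X P m m' (phi j))
            = ERscale (INR K) (KL_det X P m m' (phi j))).
    rewrite ERsum_const, length_seq; [reflexivity|].
    destruct K; [lia|discriminate].
  - intros k Hk; apply in_seq in Hk; apply KL_det_sensor; lia.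
Qed.

Lemma KL_rand_vec_flatten m m' q psi : (m < M)%nat -> (m' < M)%nat ->
  rand_quant_vec X K q psi ->
  KL_rand_vec X K Pk m m' q psi
  = ERscale (INR K) (KL_rand X P m m' (flatten K (fun j _ => q j / INR K)) (flatten K psi)).
Proof.
  intros Hm Hm' [Hq0 [_ Hpsi]]; unfold KL_rand_vec, KL_rand.
  change (fun n => KL_det X P m m' (flatten K psi n))
    with (flatten K (fun j k => KL_det X P m m' (psi j k))).
  rewrite (mix_flatten K (fun j => q j / INR K)); [| exact HK | |].
  - rewrite mix_scale_weights, ERscaleA, Rinv_r, ERscale_1 by lra.
    f_equal; apply functional_extensionality; intros j; unfold KL_det_vec.
    unfold ERsum.
    f_equal; apply map_ext_in; intros k Hk; apply in_seq in Hk; apply KL_det_sensor; lia.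
  - intros j; apply Rmult_le_pos; [apply Hq0|left; apply Rinv_0_lt_compat, HKpos].
  - intros j k Hk; apply KL_det_ge0; auto; apply Hpsi, Hk.
Qed.

Lemma I_state_vec_replicate m p phi : (m < M)%nat ->
  I_state_vec X M K Pk m p (fun j _ => phi j) = ERscale (INR K) (I_state X M P m p phi).
Proof.
  intros Hm; unfold I_state_vec, I_state; rewrite <- min_other_scale by exact HKpos.
  apply min_other_ext; intros m' Hm'; apply KL_rand_vec_replicate; assumption.
Qed.

Lemma I_state_vec_flatten m q psi : (m < M)%nat -> rand_quant_vec X K q psi ->
  I_state_vec X M K Pk m q psi
  = ERscale (INR K) (I_state X M P m (flatten K (fun j _ => q j / INR K)) (flatten K psi)).
Proof.
  intros Hm Hq; unfold I_state_vec, I_state; rewrite <- min_other_scale by exact HKpos.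
  apply min_other_ext; intros m' Hm'; apply KL_rand_vec_flatten; assumption.
Qed.

End IdenticalSensors.

Theorem proposition5p1 (X : MeasSpace) (M K : nat)
    (P : nat -> (X -> Prop) -> R) (Pk : nat -> nat -> (X -> Prop) -> R) :
  (2 <= K)%nat ->
  (forall m, (m < M)%nat -> is_prob X (P m)) ->
  (forall k m, (k < K)%nat -> (m < M)%nat -> Pk k m = P m) ->
  forall (m : nat), (m < M)%nat ->
  forall (p : nat -> R) (phi0 : nat -> X -> bool),
    maximin X M P m p phi0 ->
    maximin_vec X M K Pk m p (fun j (k : nat) => phi0 j).
Proof.
  intros HK2 Hprob HPk m Hm p phi0 [Hrq Hmax].
  assert (HK : (0 < K)%nat) by lia.
  split; [apply rand_quant_replicate, Hrq|].
  intros q psi Hq.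
  rewrite (I_state_vec_flatten X M K P Pk HK Hprob HPk m q psi Hm Hq).
  rewrite (I_state_vec_replicate X M K P Pk HK HPk m p phi0 Hm).
  apply ERle_scale; [apply lt_0_INR, HK|].
  apply Hmax, rand_quant_flatten; assumption.
Qed.
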